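(* Let $n,m\ge 5$ be integers with $m\equiv 2\pmod 4$ and $n\equiv 2\pmod 4$. Then $\gamma_p(C_n\times C_m)\le\frac{(n+2)(m+2)}{4}-6$.
   Context: All graphs are finite, simple and undirected. $C_n$ denotes the cycle of order $n$ and $G\times H$ the Cartesian product of graphs. For a graph $G$ without isolated vertices, a set $D\subseteq V(G)$ is a paired dominating set if every vertex outside $D$ has a neighbour in $D$ and the induced subgraph $G[D]$ has a perfect matching; $\gamma_p(G)$ is the minimum size of a paired dominating set. *)

From mathcomp Require Import all_boot all_order.
Set Implicit Arguments. Unset Strict Implicit. Unset Printing Implicit Defensive.

Definition cyc_adj (n : nat) (i j : 'I_n) : bool :=
  (j == (i.+1 %% n) :> nat) || (i == (j.+1 %% n) :> nat).

Definition cprod_adj (n m : nat) : rel ('I_n * 'I_m) :=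
  fun x y => ((x.1 == y.1) && cyc_adj x.2 y.2) || ((x.2 == y.2) && cyc_adj x.1 y.1).

Section Paired.
Variables (T : finType) (e : rel T).

Definition dominating (D : {set T}) : Prop :=
  forall x, x \notin D -> exists2 y, y \in D & e x y.

(* G[D] has a perfect matching: a fixed-point-free involution on D along edges *)
Definition has_perfect_matching (D : {set T}) : Prop :=
  exists f : T -> T, forall x, x \in D ->
    [/\ f x \in D, e x (f x) & f (f x) = x].

Definition paired_dominating (D : {set T}) : Prop :=
  dominating D /\ has_perfect_matching D.

Definition is_gamma_p (k : nat) : Prop :=
  (exists D, paired_dominating D /\ #|D| = k) /\
  (forall D, paired_dominating D -> k <= #|D|).
End Paired.

From mathcomp Require Import all_boot all_order zify.
From Stdlib Require Import Classical.
Set Implicit Arguments. Unset Strict Implicit. Unset Printing Implicit Defensive.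

(* Write n = 4a + 2 and m = 4b + 2 with a <= b (the torus is symmetric).
   For a = 1, rows 0 and 3 of C_6 x C_m, nearly full and paired horizontally,
   together with a patch in rows 1 and 5, give a paired dominating set of size
   2m - 2, which meets the bound.  For a >= 2, take the 2b + 1 even columns and
   in each the vertices at positions 0, 1 mod 4 after a column-dependent cyclic
   shift, paired vertically; since n = 2 mod 4 each column contributes 2a + 2
   vertices.  Neighbouring even columns have shifts differing by 2 mod n, so the
   odd column between them is dominated, and (2b + 1)(2a + 2) is within the
   bound exactly when a >= 2. *)

Definition cyc_succ n i := if i.+1 == n then 0 else i.+1.
Definition cyc_pred n i := if i == 0 then n.-1 else i.-1.

Lemma cyc_succ_lt n i : i < n -> cyc_succ n i < n.
Proof. by rewrite /cyc_succ; case: eqP; lia. Qed.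

Lemma cyc_pred_lt n i : i < n -> cyc_pred n i < n.
Proof. by rewrite /cyc_pred; case: eqP; lia. Qed.

Lemma cyc_succE n i : i < n -> cyc_succ n i = i.+1 %% n.
Proof.
rewrite /cyc_succ; case: eqP => [-> _ | ne_n lt_in]; first by rewrite modnn.
by rewrite modn_small; lia.
Qed.

Lemma cyc_succK n i : i < n -> cyc_pred n (cyc_succ n i) = i.
Proof. by rewrite /cyc_pred /cyc_succ; case: (i.+1 =P n) => /=; lia. Qed.

Lemma cyc_predK n i : i < n -> cyc_succ n (cyc_pred n i) = i.
Proof. by rewrite /cyc_pred /cyc_succ; case: eqP; case: eqP; lia. Qed.

Lemma odd_cyc_succ m j : ~~ odd m -> j < m -> odd (cyc_succ m j) = ~~ odd j.
Proof. by rewrite /cyc_succ; case: eqP => /=; lia. Qed.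

Lemma odd_cyc_pred m j : ~~ odd m -> j < m -> odd (cyc_pred m j) = ~~ odd j.
Proof. by rewrite /cyc_pred; case: eqP => /=; lia. Qed.

Lemma cyc_adj_succ n (i j : 'I_n) : j = cyc_succ n i :> nat -> cyc_adj i j.
Proof. by rewrite /cyc_adj => ->; rewrite -cyc_succE // eqxx. Qed.

Lemma cyc_adj_pred n (i j : 'I_n) : j = cyc_pred n i :> nat -> cyc_adj i j.
Proof.
by rewrite /cyc_adj => ->; rewrite -(cyc_succE (cyc_pred_lt _)) // cyc_predK // eqxx orbT.
Qed.

Inductive dir := NextRow | PrevRow | NextCol | PrevCol.

Definition dir_opp d :=
  match d with NextRow => PrevRow | PrevRow => NextRow | NextCol => PrevCol | PrevCol => NextCol end.

Section GridSteps.
Variables n m : nat.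

Definition row_step d i :=
  match d with NextRow => cyc_succ n i | PrevRow => cyc_pred n i | _ => i end.

Definition col_step d j :=
  match d with NextCol => cyc_succ m j | PrevCol => cyc_pred m j | _ => j end.

Lemma row_step_lt d i : i < n -> row_step d i < n.
Proof. by case: d => /=; [apply: cyc_succ_lt | apply: cyc_pred_lt | |]. Qed.

Lemma col_step_lt d j : j < m -> col_step d j < m.
Proof. by case: d => /=; [| | apply: cyc_succ_lt | apply: cyc_pred_lt]. Qed.

Lemma row_stepK d i : i < n -> row_step (dir_opp d) (row_step d i) = i.
Proof. by case: d => //=; [apply: cyc_succK | apply: cyc_predK]. Qed.

Lemma col_stepK d j : j < m -> col_step (dir_opp d) (col_step d j) = j.
Proof. by case: d => //=; [apply: cyc_succK | apply: cyc_predK]. Qed.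

Definition grid_step d (x : 'I_n * 'I_m) : 'I_n * 'I_m :=
  (Ordinal (row_step_lt d (ltn_ord x.1)), Ordinal (col_step_lt d (ltn_ord x.2))).

Lemma grid_step_adj d x : cprod_adj x (grid_step d x).
Proof.
case: x => i j; rewrite /cprod_adj -!val_eqE /=.
case: d; rewrite eqxx /=.
- by rewrite (@cyc_adj_succ _ i) ?orbT.
- by rewrite (@cyc_adj_pred _ i) ?orbT.
- by rewrite (@cyc_adj_succ _ j).
- by rewrite (@cyc_adj_pred _ j).
Qed.

Lemma grid_stepK d x : grid_step (dir_opp d) (grid_step d x) = x.
Proof.
case: x => i j; congr pair; apply: val_inj; rewrite /= ?row_stepK ?col_stepK //.
Qed.

End GridSteps.

Section Patterns.
Variables (n m : nat) (P : nat -> nat -> bool) (d : nat -> nat -> dir).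

Definition pattern_set : {set 'I_n * 'I_m} := [set x : 'I_n * 'I_m | P x.1 x.2].

Lemma card_pattern_set : #|pattern_set| = \sum_(i < n) \sum_(j < m) P i j.
Proof.
rewrite pair_big /= cardsE -sum1_card big_mkcond /=.
by apply: eq_bigr => x _; rewrite unfold_in; case: (P _ _).
Qed.

Hypothesis P_dominates : forall i j, i < n -> j < m ->
  [|| P i j, P (cyc_succ n i) j, P (cyc_pred n i) j, P i (cyc_succ m j) | P i (cyc_pred m j)].

(* [d i j] is the direction of the partner of [(i, j)] in the perfect matching. *)
Hypothesis d_matches : forall i j, i < n -> j < m -> P i j ->
  let d' := d i j in
  P (row_step n d' i) (col_step m d' j) /\
  d (row_step n d' i) (col_step m d' j) = dir_opp d'.

Lemma pattern_set_paired_dominating : paired_dominating (@cprod_adj n m) pattern_set.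
Proof.
split.
  move=> [i j]; rewrite inE /= => Pij.
  have [d' Pd'] : exists d', P (row_step n d' i) (col_step m d' j).
    have := P_dominates (ltn_ord i) (ltn_ord j); rewrite (negbTE Pij) /=.
    by case/or4P; [exists NextRow | exists PrevRow | exists NextCol | exists PrevCol].
  by exists (grid_step d' (i, j)); rewrite ?inE ?grid_step_adj.
exists (fun x : 'I_n * 'I_m => grid_step (d x.1 x.2) x) => -[i j]; rewrite inE /= => Pij.
have [Pd dK] := d_matches (ltn_ord i) (ltn_ord j) Pij.
by rewrite inE /= Pd grid_step_adj dK grid_stepK.
Qed.

End Patterns.

Definition swap_set n m (D : {set 'I_n * 'I_m}) : {set 'I_m * 'I_n} :=
  [set (x.2, x.1) | x in D].

Lemma swap_set_paired_dominating n m (D : {set 'I_n * 'I_m}) :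
  paired_dominating (@cprod_adj n m) D -> paired_dominating (@cprod_adj m n) (swap_set D).
Proof.
have memE (z : 'I_n * 'I_m) : ((z.2, z.1) \in swap_set D) = (z \in D).
  by rewrite mem_imset //; apply: (can_inj (g := fun y => (y.2, y.1))) => -[].
have adjE (x y : 'I_n * 'I_m) : cprod_adj (x.2, x.1) (y.2, y.1) = cprod_adj x y.
  by rewrite /cprod_adj orbC.
move=> [dom [f f_match]]; split.
  move=> [j i]; rewrite -[(j, i)]/((i, j).2, (i, j).1) memE => /dom[y Dy adj_y].
  by exists (y.2, y.1); rewrite ?memE ?adjE.
exists (fun z => ((f (z.2, z.1)).2, (f (z.2, z.1)).1)) => -[j i].
rewrite -[(j, i)]/((i, j).2, (i, j).1) memE => /f_match[Df adj_f ff].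
by rewrite memE adjE /= -surjective_pairing ff.
Qed.

Lemma card_swap_set n m (D : {set 'I_n * 'I_m}) : #|swap_set D| = #|D|.
Proof. by rewrite card_imset //; apply: (can_inj (g := fun y => (y.2, y.1))) => -[]. Qed.

Lemma gamma_p_le (T : finType) (e : rel T) (D : {set T}) :
  paired_dominating e D -> exists2 g, is_gamma_p e g & g <= #|D|.
Proof.
move: {2}#|D| (erefl #|D|) => k; elim/ltn_ind: k D => k IH D cardD pdD.
case: (classic (exists2 D', paired_dominating e D' & #|D'| < k)).
  move=> [D' pdD' lt_D']; have [g g_min le_g] := IH _ lt_D' D' erefl pdD'.
  by exists g; rewrite // cardD (leq_trans le_g (ltnW lt_D')).
move=> no_smaller; exists k; last by rewrite cardD.
split; first by exists D.
move=> D' pdD'; rewrite leqNgt; apply/negP => lt_D'.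
by apply: no_smaller; exists D'.
Qed.

Lemma big_ord_const_tail (F : nat -> nat) k m c : k <= m ->
  (forall j, k <= j -> F j = c) -> \sum_(j < m) F j = \sum_(j < k) F j + c * (m - k).
Proof.
move=> le_km F_tail; rewrite -!(big_mkord xpredT) (big_cat_nat (leq0n k) le_km) /=.
congr (_ + _); rewrite (eq_big_nat _ _ (F2 := fun=> c)) ?sum_nat_const_nat 1?mulnC //.
by move=> j /andP[/F_tail].
Qed.

Definition six_pattern i j :=
  [|| (i == 0) && ((j <= 1) || (6 <= j)),
      (i == 3) && ~~ ((j == 3) || (j == 4)) |
      ((i == 1) || (i == 5)) && ((j == 3) || (j == 4))].

Definition six_dir i j := if (i == 0) (+) odd j then NextCol else PrevCol.

Section SixRows.
Variable m : nat.
Hypothesis m_ge6 : 6 <= m.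

Lemma six_pattern_dominates i j : i < 6 -> j < m ->
  [|| six_pattern i j, six_pattern (cyc_succ 6 i) j, six_pattern (cyc_pred 6 i) j,
      six_pattern i (cyc_succ m j) | six_pattern i (cyc_pred m j)].
Proof.
rewrite /six_pattern /cyc_succ /cyc_pred.
by case: i => [|[|[|[|[|[|i]]]]]] //= _ lt_jm; case: (j.+1 =P m); case: (j =P 0); lia.
Qed.

Lemma card_six_pattern : \sum_(i < 6) \sum_(j < m) six_pattern i j = 2 * m - 2.
Proof.
have tail i b : (forall j, 6 <= j -> six_pattern i j = b) ->
    \sum_(j < m) six_pattern i j = \sum_(j < 6) six_pattern i j + b * (m - 6).
  by move=> tail_b; apply: (@big_ord_const_tail (fun j => six_pattern i j)) => // j /tail_b ->.
rewrite !big_ord_recr big_ord0 /= !big1_eq (tail 0 true) ?(tail 1 false) ?(tail 3 true)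
  ?(tail 5 false); try by move=> j; rewrite /six_pattern /=; lia.
by rewrite !big_ord_recr !big_ord0 /=; lia.
Qed.

Hypothesis m_even : ~~ odd m.

Lemma six_dir_matches i j : i < 6 -> j < m -> six_pattern i j ->
  let d' := six_dir i j in
  six_pattern (row_step 6 d' i) (col_step m d' j) /\
  six_dir (row_step 6 d' i) (col_step m d' j) = dir_opp d'.
Proof.
move=> lt_i6 lt_jm Pij; rewrite /six_dir; case: ifP => dir_ij /=.
  rewrite odd_cyc_succ // addbN dir_ij; split => //.
  move: Pij dir_ij; rewrite /six_pattern /cyc_succ.
  by case: i lt_i6 => [|[|[|[|[|[|i]]]]]] //= _; case: (j.+1 =P m); lia.
rewrite odd_cyc_pred // addbN dir_ij; split => //.
move: Pij dir_ij; rewrite /six_pattern /cyc_pred.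
by case: i lt_i6 => [|[|[|[|[|[|i]]]]]] //= _; case: (j =P 0); lia.
Qed.

End SixRows.

Definition cyc_sub n i s := if s <= i then i - s else i + n - s.

Lemma big_cyc_sub (F : nat -> nat) n s : s <= n ->
  \sum_(i < n) F (cyc_sub n i s) = \sum_(i < n) F i.
Proof.
move=> le_sn; rewrite -(big_mkord xpredT (fun i => F (cyc_sub n i s))) -(big_mkord xpredT F).
rewrite (big_cat_nat (leq0n s) le_sn) (big_cat_nat (leq0n (n - s)) (leq_subr s n)) /= addnC.
rewrite (big_addn 0 n s) [X in _ = _ + X](big_addn 0 n (n - s)) subKn //.
congr (_ + _); apply: eq_big_nat => i /andP[_ lt_i]; rewrite /cyc_sub.
  by rewrite ifT; [congr F | ]; lia.
by rewrite ifN; [congr F | ]; lia.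
Qed.

Definition pattern4 k := k %% 4 < 2.

Lemma sum_pattern4 a : \sum_(k < 4 * a + 2) pattern4 k = 2 * a + 2.
Proof.
rewrite -(big_mkord xpredT (fun k => nat_of_bool (pattern4 k))).
elim: a => [|a IH]; first by rewrite !big_nat_recr ?big_geq.
rewrite (_ : 4 * a.+1 + 2 = (4 * a + 2).+4); last by lia.
by do 4 rewrite big_nat_recr //=; rewrite IH /pattern4; lia.
Qed.

Lemma sum_even_indices k c : \sum_(j < k.*2) (~~ odd j) * c = k * c.
Proof.
rewrite -(big_mkord xpredT (fun j => ~~ odd j * c)); elim: k => [|k IH]; first by rewrite big_geq.
by rewrite doubleS !big_nat_recr //= IH odd_double; lia.
Qed.

Section ShiftedColumns.
Variable a : nat.
Local Notation n := (4 * a + 2).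

Lemma pattern4_dominates s i : s < n -> i < n ->
  [|| pattern4 (cyc_sub n i s), pattern4 (cyc_sub n (cyc_succ n i) s)
    | pattern4 (cyc_sub n (cyc_pred n i) s)].
Proof.
rewrite /pattern4 /cyc_sub /cyc_succ /cyc_pred => lt_sn lt_in.
by case: (i.+1 =P n); case: (i =P 0); repeat case: ifP; lia.
Qed.

Lemma pattern4_succ s i : s < n -> i < n ->
  cyc_sub n i s %% 4 = 0 -> cyc_sub n (cyc_succ n i) s %% 4 = 1.
Proof. by rewrite /cyc_sub /cyc_succ; case: (i.+1 =P n); repeat case: ifP; lia. Qed.

Lemma pattern4_pred s i : s < n -> i < n ->
  cyc_sub n i s %% 4 = 1 -> cyc_sub n (cyc_pred n i) s %% 4 = 0.
Proof. by rewrite /cyc_sub /cyc_pred; case: (i =P 0); repeat case: ifP; lia. Qed.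

(* Shifts differing by 2 modulo [n]; as [n = 4 * a + 2], the wrap-around step
   from [4 * a] to [0] is one of them. *)
Definition shift_step s s' := (s' == s + 2) || (s == 4 * a) && (s' == 0).

Lemma pattern4_shift_step s s' i : s < n -> s' < n -> shift_step s s' -> i < n ->
  pattern4 (cyc_sub n i s) || pattern4 (cyc_sub n i s').
Proof. by rewrite /shift_step /pattern4 /cyc_sub; repeat case: ifP; lia. Qed.

(* Shifts 0, 2, ..., 4a on the first even columns, then alternately 0 and 4a;
   [a <= b] makes the cyclic step from column [m - 2] back to column 0 fit. *)
Definition column_shift j := if j <= 4 * a then j else if j %% 4 == 2 then 0 else 4 * a.

Lemma column_shift_lt j : column_shift j < n.
Proof. by rewrite /column_shift; repeat case: ifP; lia. Qed.

Definition shifted_pattern i j := ~~ odd j && pattern4 (cyc_sub n i (column_shift j)).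

Definition shifted_dir i j :=
  if cyc_sub n i (column_shift j) %% 4 == 0 then NextRow else PrevRow.

Variable b : nat.
Local Notation m := (4 * b + 2).

Lemma shifted_dir_matches i j : i < n -> j < m -> shifted_pattern i j ->
  let d' := shifted_dir i j in
  shifted_pattern (row_step n d' i) (col_step m d' j) /\
  shifted_dir (row_step n d' i) (col_step m d' j) = dir_opp d'.
Proof.
move=> lt_in lt_jm /andP[even_j]; rewrite /shifted_dir /pattern4.
case: eqP => [rem0 _ | rem_ne0 rem_lt2] /=; rewrite /shifted_pattern /pattern4 even_j.
  by rewrite (pattern4_succ (column_shift_lt j) lt_in rem0).
have rem1 : cyc_sub n i (column_shift j) %% 4 = 1 by lia.
by rewrite (pattern4_pred (column_shift_lt j) lt_in rem1).
Qed.

Lemma card_shifted_pattern :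
  \sum_(i < n) \sum_(j < m) shifted_pattern i j = (2 * b + 1) * (2 * a + 2).
Proof.
rewrite exchange_big /= (eq_bigr (fun j : 'I_m => ~~ odd j * (2 * a + 2))).
  by rewrite (_ : m = (2 * b + 1).*2) ?sum_even_indices //; lia.
move=> j _; rewrite /shifted_pattern; case: (odd j) => /=; first by rewrite big1.
rewrite (big_cyc_sub (fun k => nat_of_bool (pattern4 k))) ?sum_pattern4 ?mul1n //.
exact/ltnW/column_shift_lt.
Qed.

Hypothesis le_ab : a <= b.

Lemma column_shift_step j : j < m -> odd j ->
  shift_step (column_shift (cyc_pred m j)) (column_shift (cyc_succ m j)) ||
  shift_step (column_shift (cyc_succ m j)) (column_shift (cyc_pred m j)).
Proof.
rewrite /shift_step /column_shift /cyc_succ /cyc_pred => lt_j odd_j.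
by case: (j.+1 =P 4 * b + 2); case: (j =P 0); rewrite ?leq0n /=; repeat case: ifP; lia.
Qed.

Lemma shifted_pattern_dominates i j : i < n -> j < m ->
  [|| shifted_pattern i j, shifted_pattern (cyc_succ n i) j, shifted_pattern (cyc_pred n i) j,
      shifted_pattern i (cyc_succ m j) | shifted_pattern i (cyc_pred m j)].
Proof.
move=> lt_in lt_jm; rewrite /shifted_pattern.
case: (boolP (odd j)) => odd_j /=; last first.
  by case/or3P: (pattern4_dominates (column_shift_lt j) lt_in) => ->; rewrite ?orbT.
have m_even : ~~ odd m by rewrite oddD oddM.
rewrite odd_cyc_succ ?odd_cyc_pred ?odd_j //=.
case/orP: (column_shift_step lt_jm odd_j);
  move/(pattern4_shift_step (column_shift_lt _) (column_shift_lt _))/(_ lt_in);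
  by case/orP => ->; rewrite ?orbT.
Qed.

End ShiftedColumns.

Lemma six_rows_paired_dominating m : 6 <= m -> ~~ odd m ->
  exists2 D : {set 'I_6 * 'I_m}, paired_dominating (@cprod_adj 6 m) D & #|D| = 2 * m - 2.
Proof.
move=> m_ge6 m_even; exists (pattern_set 6 m six_pattern).
  exact: (pattern_set_paired_dominating (six_pattern_dominates m_ge6)
                                       (six_dir_matches m_ge6 m_even)).
by rewrite (card_pattern_set 6 m six_pattern) card_six_pattern.
Qed.

Lemma shifted_paired_dominating a b : a <= b ->
  exists2 D : {set 'I_(4 * a + 2) * 'I_(4 * b + 2)},
    paired_dominating (@cprod_adj _ _) D & #|D| = (2 * b + 1) * (2 * a + 2).
Proof.
move=> le_ab; exists (pattern_set _ _ (shifted_pattern a)).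
  exact: (pattern_set_paired_dominating (shifted_pattern_dominates le_ab)
                                        (@shifted_dir_matches a b)).
by rewrite (card_pattern_set _ _ (shifted_pattern a)) card_shifted_pattern.
Qed.

Lemma small_paired_dominating a b : 1 <= a <= b ->
  exists2 D : {set 'I_(4 * a + 2) * 'I_(4 * b + 2)},
    paired_dominating (@cprod_adj _ _) D & 4 * #|D| + 24 <= (4 * a + 4) * (4 * b + 4).
Proof.
case/andP=> a_ge1 le_ab; have [-> | a_ne1] := eqVneq a 1.
  have [D pdD card_D] := @six_rows_paired_dominating (4 * b + 2) ltac:(lia) ltac:(lia).
  by exists D; rewrite // card_D; lia.
have [D pdD card_D] := shifted_paired_dominating le_ab.
by exists D; rewrite // card_D; nia.
Qed.

Theorem theorem5p5 (n m : nat) :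
  5 <= n -> 5 <= m -> m %% 4 = 2 -> n %% 4 = 2 ->
  exists g : nat, is_gamma_p (@cprod_adj n m) g /\
  4 * g + 24 <= (n + 2) * (m + 2).
Proof.
move=> n_ge5 m_ge5 m_mod4 n_mod4.
have [a -> a_ge1] : exists2 a, n = 4 * a + 2 & 1 <= a by exists (n %/ 4); lia.
have [b -> b_ge1] : exists2 b, m = 4 * b + 2 & 1 <= b by exists (m %/ 4); lia.
suff [D pdD card_D] : exists2 D : {set 'I_(4 * a + 2) * 'I_(4 * b + 2)},
    paired_dominating (@cprod_adj _ _) D &
    4 * #|D| + 24 <= (4 * a + 4) * (4 * b + 4).
  have [g g_min le_g] := gamma_p_le pdD; exists g; split => //.
  (* restated so that [#|D|] is syntactically the term occurring in [card_D] *)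
  have : g <= #|D| := le_g; nia.
have [le_ab | /ltnW le_ba] := leqP a b; first by apply: small_paired_dominating; lia.
have [D pdD card_D] := @small_paired_dominating b a ltac:(lia).
exists (swap_set D); first exact: swap_set_paired_dominating.
by rewrite card_swap_set; lia.
Qed.
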